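(* For $i=1,2$ let $\mathcal{D}_i=(\Omega_i,\mathcal{B}_i)$ be a supersimple $2$-$(n_i,4,\lambda_i)$ design satisfying property $(\triangle)$, such that $(\Omega_i,\mathcal{C}_i)$ is a regular two-graph where $\mathcal{C}_i$ is the set of collinear triples of $\mathcal{D}_i$, and $n_i>2\lambda_i+2$. Let $\infty_i\in\Omega_i$. If the derived graphs $\mathcal{G}_{\mathcal{D}_1,\infty_1}$ and $\mathcal{G}_{\mathcal{D}_2,\infty_2}$ are isomorphic as graphs, then $\mathcal{D}_1$ and $\mathcal{D}_2$ are isomorphic as designs.
   Context: A $2$-$(n,4,\lambda)$ design $(\Omega,\mathcal{B})$: $n$ points, a multiset of $4$-subsets (lines), every $2$-subset in exactly $\lambda$ lines; supersimple: distinct lines meet in at most two points. Property $(\triangle)$: if $B_1,B_2\in\mathcal{B}$ with $|B_1\cap B_2|=2$ then $B_1\triangle B_2\in\mathcal{B}$. Collinear triple: $3$-subset contained in a line. Regular two-graph: $(\Omega,\mathcal{C})$ is a $2$-$(n,3,\mu)$ design with every $4$-subset containing $0,2$ or $4$ members of $\mathcal{C}$. The derived graph $\mathcal{G}_{\mathcal{D},\infty}$ has vertex set $\Omega\setminus\{\infty\}$, with $a,b$ adjacent iff $\{\infty,a,b\}\in\mathcal{C}$. Two designs are isomorphic if there is a bijection between point sets mapping the lines of one onto the lines of the other. *)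

From mathcomp Require Import all_boot.
Set Implicit Arguments. Unset Strict Implicit. Unset Printing Implicit Defensive.

(* A design on the finite point set T is given by a multiset of lines,
   encoded by its multiplicity function B : {set T} -> nat
   (B b = number of copies of the block b). *)

Definition is_2design (T : finType) (k lam : nat) (B : {set T} -> nat) : Prop :=
  (forall b : {set T}, 0 < B b -> #|b| = k) /\
  (forall p : {set T}, #|p| = 2 -> \sum_(b : {set T} | p \subset b) B b = lam).

(* supersimple: distinct lines (including distinct copies of a repeated
   block) meet in at most two points. *)
Definition supersimple (T : finType) (B : {set T} -> nat) : Prop :=
  (forall b : {set T}, B b <= 1) /\
  (forall b1 b2 : {set T}, 0 < B b1 -> 0 < B b2 -> b1 != b2 ->
     #|b1 :&: b2| <= 2).

Definition symdiff (T : finType) (A C : {set T}) : {set T} :=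
  (A :\: C) :|: (C :\: A).

Definition prop_triangle (T : finType) (B : {set T} -> nat) : Prop :=
  forall b1 b2 : {set T}, 0 < B b1 -> 0 < B b2 -> #|b1 :&: b2| = 2 ->
    0 < B (symdiff b1 b2).

Definition collinear_triples (T : finType) (B : {set T} -> nat) : {set {set T}} :=
  [set t : {set T} | (#|t| == 3) && [exists b : {set T}, (0 < B b) && (t \subset b)]].

Definition regular_two_graph (T : finType) (C : {set {set T}}) : Prop :=
  (exists mu : nat, is_2design 3 mu (fun t => nat_of_bool (t \in C))) /\
  (forall q : {set T}, #|q| = 4 ->
     #|[set t in C | t \subset q]| \in [:: 0; 2; 4]).

Definition dvertex (T : finType) (inf : T) := {x : T | x != inf}.

Definition derived_adj (T : finType) (B : {set T} -> nat) (inf : T)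
  : rel (dvertex inf) :=
  fun a b => [set inf; val a; val b] \in collinear_triples B.
Arguments derived_adj [T] B inf.

Definition graph_isomorphic (V1 V2 : finType) (e1 : rel V1) (e2 : rel V2) : Prop :=
  exists g : V1 -> V2, bijective g /\ forall a b, e1 a b = e2 (g a) (g b).

Definition design_isomorphic (T1 T2 : finType)
  (B1 : {set T1} -> nat) (B2 : {set T2} -> nat) : Prop :=
  exists phi : T1 -> T2, bijective phi /\
    forall b : {set T1}, B2 (phi @: b) = B1 b.

From mathcomp Require Import all_boot zify.
Set Implicit Arguments. Unset Strict Implicit. Unset Printing Implicit Defensive.

(* A 4-set is a line exactly when its four 3-subsets are collinear and every
   point outside it is collinear with an even number of its six pairs.  For a
   line, property (triangle) matches the collinear triples through an outside
   point in pairs of opposite edges.  Conversely, if the line through three of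
   the points had a fourth point x outside the 4-set, the two-graph parity would
   make x collinear with the remaining point d and each of the other three; a
   point e not collinear with d and x, which exists because n > 2 lam + 2, would
   then see the pairs of the 4-set and those of that line with different
   parities.  This characterization only involves collinear triples, and in a
   regular two-graph a triple is collinear iff an odd number of the triples it
   forms with a fixed point inf are, i.e. collinearity is read off the derived
   graph at inf.  Hence an isomorphism of derived graphs, extended by
   inf1 |-> inf2, maps lines onto lines. *)


Lemma card_set3 (T : finType) (x y z : T) :
  (#|[set x; y; z]| == 3) = uniq [:: x; y; z].
Proof.
have -> : #|[set x; y; z]| = #|[:: x; y; z]|.
  by apply: eq_card => w; rewrite !inE orbA.
by apply/eqP/card_uniqP.
Qed.

Lemma card_set4 (T : finType) (x y z w : T) :
  (#|[set x; y; z; w]| == 4) = uniq [:: x; y; z; w].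
Proof.
have -> : #|[set x; y; z; w]| = #|[:: x; y; z; w]|.
  by apply: eq_card => v; rewrite !inE !orbA.
by apply/eqP/card_uniqP.
Qed.

Lemma card_subsets_setD1 (T : finType) (q : {set T}) (C : {set {set T}}) :
  {in C, forall t : {set T}, #|t|.+1 = #|q|} ->
  #|[set t in C | t \subset q]| = \sum_(z in q) (q :\ z \in C).
Proof.
move=> cardCq.
have -> : [set t in C | t \subset q] = (fun z => q :\ z) @: [set z in q | q :\ z \in C].
  apply/setP => t; rewrite inE; apply/andP/imsetP => [[tC tq]|[z]]; last first.
    by rewrite inE => /andP[_ zC] ->; rewrite zC subD1set.
  have /cards1P[z qDt] : #|q :\: t| == 1.
    by rewrite cardsD (setIidPr tq) -(cardCq _ tC) subSnn.
  have tE : t = q :\ z by rewrite -qDt setDDr setDv set0U (setIidPr tq).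
  have : z \in q :\: t by rewrite qDt set11.
  by rewrite inE tE => /andP[_ zq]; exists z; rewrite // inE zq -tE.
rewrite card_in_imset => [|z1 z2]; last first.
  rewrite !inE => /andP[z1q _] /andP[z2q _] eqD.
  by move: (setD11 z2 q); rewrite -eqD !inE z2q andbT => /negbFE/eqP.
rewrite -sum1_card big_mkcond /= [RHS]big_mkcond /=.
by apply: eq_bigr => z _; rewrite inE; case: (z \in q); case: (q :\ z \in C).
Qed.

Lemma sum_setD1_set4 (T : finType) (F : {set T} -> nat) (a b c d : T) :
  uniq [:: a; b; c; d] ->
  \sum_(z in [set a; b; c; d]) F ([set a; b; c; d] :\ z) =
  F [set b; c; d] + F [set a; c; d] + F [set a; b; d] + F [set a; b; c].
Proof.
rewrite /= !inE !negb_or => /and4P[/and3P[ab ac ad] /andP[bc bd] cd _].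
have [ba ca da] : [/\ b != a, c != a & d != a] by split; rewrite eq_sym.
have [cb db dc] : [/\ c != b, d != b & d != c] by split; rewrite eq_sym.
set q := [set a; b; c; d].
have qE (z : T) (A : {set T}) : z \notin A -> q = z |: A -> q :\ z = A.
  by move=> zA ->; rewrite setU1K.
have [Ea Eb Ec Ed] : [/\ q :\ a = [set b; c; d], q :\ b = [set a; c; d],
                          q :\ c = [set a; b; d] & q :\ d = [set a; b; c]].
  split; apply: qE; rewrite ?inE ?negb_or; do ?[apply/andP; split] => //;
  by apply/setP => w; rewrite !inE; case: (w == a); case: (w == b); case: (w == c); case: (w == d).
rewrite (eq_bigl (mem (a |: (b |: (c |: [set d]))))) => [|w]; last by rewrite !inE !orbA.
rewrite !big_setU1 ?big_set1 /= ?Ea ?Eb ?Ec ?Ed ?addnA // !inE ?negb_or;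
  by do ?[apply/andP; split].
Qed.

Lemma uniq4_triples (T : eqType) (a b c d : T) : uniq [:: a; b; c; d] ->
  [/\ uniq [:: a; b; c], uniq [:: a; b; d], uniq [:: a; c; d] & uniq [:: b; c; d]].
Proof.
move=> u; split; [exact: (mask_uniq u [:: true; true; true; false])
  | exact: (mask_uniq u [:: true; true; false; true])
  | exact: (mask_uniq u [:: true; false; true; true])
  | exact: (mask_uniq u [:: false; true; true; true])].
Qed.

Lemma uniq4_pairings (T : eqType) (a b c d : T) : uniq [:: a; b; c; d] ->
  uniq [:: a; c; b; d] /\ uniq [:: a; d; b; c].
Proof.
move=> u; split; rewrite -(perm_uniq (_ : perm_eq [:: a; b; c; d] _)) //;
  by apply/permP => P /=; lia.
Qed.

Lemma mem_set4 (T : finType) (a b c d : T) : [set a; b; c; d] =i [:: a; b; c; d].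
Proof. by move=> w; rewrite !inE !orbA. Qed.

Lemma cards4P (T : finType) (A : {set T}) :
  reflect (exists a b c d, uniq [:: a; b; c; d] /\ A = [set a; b; c; d]) (#|A| == 4).
Proof.
apply: (iffP idP) => [A4|[a [b [c [d [u ->]]]]]]; last by rewrite card_set4.
have : size (enum A) = 4 by rewrite -cardE; apply/eqP.
have := enum_uniq A; have := mem_enum A.
case: (enum A) => [|a [|b [|c [|d [|]]]]] // memA u _.
exists a, b, c, d; split => //; apply/setP => w.
by rewrite -[LHS]memA !inE !orbA.
Qed.

Lemma card_bigcup_le (I T : finType) (P : pred I) (F : I -> {set T}) :
  #|\bigcup_(i | P i) F i| <= \sum_(i | P i) #|F i|.
Proof.
apply: (big_ind2 (fun (A : {set T}) n => #|A| <= n)) => [|A1 n1 A2 n2 le1 le2|//].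
  by rewrite cards0.
exact: leq_trans (leq_card_setU A1 A2).1 (leq_add le1 le2).
Qed.

Lemma regular_two_graph_even (T : finType) (C : {set {set T}}) (q : {set T}) :
  regular_two_graph C -> #|q| = 4 -> ~~ odd #|[set t in C | t \subset q]|.
Proof. by case=> _ /[apply]; rewrite !inE => /or3P[] /eqP ->. Qed.

Lemma supersimple_mult (T : finType) (B : {set T} -> nat) (b : {set T}) :
  supersimple B -> B b = (0 < B b).
Proof. by case=> /(_ b); case: (B b) => [|[|]]. Qed.

Definition collinear (T : finType) (B : {set T} -> nat) (x y z : T) : bool :=
  [set x; y; z] \in collinear_triples B.

Definition collinear_pairs (T : finType) (B : {set T} -> nat) (e a b c d : T) : nat :=
  collinear B e a b + collinear B e a c + collinear B e a d +
  collinear B e b c + collinear B e b d + collinear B e c d.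

Section Collinearity.

Variables (T : finType) (B : {set T} -> nat).

Lemma collinearP x y z :
  reflect (uniq [:: x; y; z] /\ exists2 b, 0 < B b & [/\ x \in b, y \in b & z \in b])
          (collinear B x y z).
Proof.
rewrite /collinear inE card_set3.
apply: (iffP andP) => [[u /existsP[b /andP[lb]]]|[u [b lb [xb yb zb]]]].
  by rewrite !subUset !sub1set => /andP[/andP[xb yb] zb]; split=> //; exists b.
by split=> //; apply/existsP; exists b; rewrite lb !subUset !sub1set xb yb zb.
Qed.

Lemma collinear_uniq x y z : collinear B x y z -> uniq [:: x; y; z].
Proof. by case/collinearP. Qed.

Lemma collinear_line b x y z : 0 < B b -> uniq [:: x; y; z] ->
  x \in b -> y \in b -> z \in b -> collinear B x y z.
Proof. by move=> lb u xb yb zb; apply/collinearP; split=> //; exists b. Qed.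

Lemma collinear_swapl x y z : collinear B x y z = collinear B y x z.
Proof. by rewrite /collinear [[set x] :|: _]setUC. Qed.

Lemma collinear_swapr x y z : collinear B x y z = collinear B x z y.
Proof. by rewrite /collinear setUAC. Qed.

Hypothesis two_graph : regular_two_graph (collinear_triples B).

Lemma collinear4_even a b c d : uniq [:: a; b; c; d] ->
  ~~ odd (collinear B a b c + collinear B a b d + collinear B a c d + collinear B b c d).
Proof.
move=> u; have q4 : #|[set a; b; c; d]| = 4 by apply/eqP; rewrite card_set4.
have := regular_two_graph_even two_graph q4.
rewrite card_subsets_setD1 => [|t]; last first.
  by rewrite inE q4 => /andP[/eqP ->].
have rev_sum (m n p r : nat) : m + n + p + r = r + p + n + m by lia.
by rewrite (sum_setD1_set4 (fun t => t \in collinear_triples B)) // rev_sum.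
Qed.

Lemma collinear_apex o x y z : uniq [:: o; x; y; z] ->
  collinear B x y z = odd (collinear B o x y + collinear B o x z + collinear B o y z).
Proof.
move/collinear4_even; rewrite !oddD !oddb.
by case: (collinear B x y z); rewrite ?addbT ?addbF ?negbK // => /negbTE.
Qed.

Lemma collinear_apex_pairs x a b c d : uniq [:: x; a; b; c; d] ->
  collinear B x a b -> collinear B x a c -> collinear B x b c ->
  collinear B a b d -> collinear B a c d -> ~~ odd (collinear_pairs B x a b c d) ->
  [&& collinear B x a d, collinear B x b d & collinear B x c d].
Proof.
move=> u xab xac xbc abd acd.
have := collinear4_even (mask_uniq u [:: true; true; true; false; true]).
have := collinear4_even (mask_uniq u [:: true; true; false; true; true]).
rewrite /collinear_pairs xab xac xbc abd acd.
by case: (collinear B x a d); case: (collinear B x b d); case: (collinear B x c d).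
Qed.

Lemma collinear_pairs_parity_swap e a b c d x : uniq [:: e; a; b; c; d; x] ->
  collinear B a d x -> collinear B b d x -> collinear B c d x -> ~~ collinear B e d x ->
  odd (collinear_pairs B e a b c d) != odd (collinear_pairs B e a b c x).
Proof.
move=> u adx bdx cdx /negbTE edx.
have swap_parity (p q : bool) : ~~ odd (p + q + false + true) -> q = ~~ p.
  by case: p; case: q.
have := collinear4_even (mask_uniq u [:: true; true; false; false; true; true]).
have := collinear4_even (mask_uniq u [:: true; false; true; false; true; true]).
have := collinear4_even (mask_uniq u [:: true; false; false; true; true; true]).
rewrite adx bdx cdx edx => /swap_parity ecx /swap_parity ebx /swap_parity eax.
rewrite /collinear_pairs eax ebx ecx !oddD !oddb.
by case: (collinear B e a b); case: (collinear B e a c); case: (collinear B e b c);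
  case: (collinear B e a d); case: (collinear B e b d); case: (collinear B e c d).
Qed.

End Collinearity.

Definition line_pattern (T : finType) (B : {set T} -> nat) (q : {set T}) : Prop :=
  exists a b c d, [/\ uniq [:: a; b; c; d], q = [set a; b; c; d],
    [&& collinear B a b c, collinear B a b d, collinear B a c d & collinear B b c d] &
    forall e, e \notin q -> ~~ odd (collinear_pairs B e a b c d)].

Section Design.

Variables (T : finType) (B : {set T} -> nat) (lam : nat).
Hypothesis design : is_2design 4 lam B.
Hypothesis simple : supersimple B.
Hypothesis triangle : prop_triangle B.

Lemma line_card b : 0 < B b -> #|b| = 4.
Proof. by case: design => card_line _; apply: card_line. Qed.

Lemma line_fourth_point b x y z : 0 < B b -> uniq [:: x; y; z] ->
  x \in b -> y \in b -> z \in b -> exists2 w, uniq [:: x; y; z; w] & b = [set x; y; z; w].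
Proof.
move=> lb u xb yb zb.
have sub : [set x; y; z] \subset b by rewrite !subUset !sub1set xb yb zb.
have /cards1P[w bD] : #|b :\: [set x; y; z]| == 1.
  by rewrite cardsD (setIidPr sub) line_card //; move: u; rewrite -card_set3 => /eqP ->.
have bE : b = [set x; y; z; w] by rewrite -bD -{1}(setID b [set x; y; z]) (setIidPr sub).
by exists w; rewrite // -card_set4 -bE line_card.
Qed.

Lemma collinear_opposite_pair p x y s t e : 0 < B p -> uniq [:: x; y; s; t] ->
  x \in p -> y \in p -> s \in p -> t \in p -> e \notin p ->
  collinear B e x y -> collinear B e s t.
Proof.
move=> lp u xp yp sp tp ep /collinearP[_ [M lM [eM xM yM]]].
(* M meets p in {x, y} only, so the line [symdiff M p] passes through e, s, t. *)
move: u; rewrite /= !inE !negb_or => /and4P[/and3P[xy xs xt] /andP[ys yt] st _].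
have Mp : M :&: p = [set x; y].
  apply/esym/eqP; rewrite eqEcard subUset !sub1set !inE xM xp yM yp cards2 xy.
  by case: simple => _; apply=> //; apply: contraNneq ep => <-.
have notM v : v \in p -> v != x -> v != y -> v \notin M.
  move=> vp vx vy; apply: contra (_ : v \notin M :&: p) => [vM|]; first by rewrite inE vM.
  by rewrite Mp !inE negb_or vx vy.
have lD : 0 < B (symdiff M p) by apply: triangle; rewrite // Mp cards2 xy.
apply: (collinear_line lD); rewrite /symdiff ?inE ?eM ?ep ?sp ?tp ?orbT //=.
- by rewrite !negb_or st !andbT; apply/andP; split; apply: contraNneq ep => ->.
- by rewrite andbT notM // eq_sym.
- by rewrite andbT notM // eq_sym.
Qed.

Lemma collinear_pairs_line_even p a b c d e : 0 < B p -> uniq [:: a; b; c; d] ->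
  a \in p -> b \in p -> c \in p -> d \in p -> e \notin p ->
  ~~ odd (collinear_pairs B e a b c d).
Proof.
move=> lp u ap bp cp dp ep.
have opposite x y s t : uniq [:: x; y; s; t] ->
    x \in p -> y \in p -> s \in p -> t \in p -> collinear B e x y = collinear B e s t.
  move=> uxyst xp yp sp tp; apply/idP/idP; apply: (collinear_opposite_pair lp) => //.
  by rewrite (uniq_catC [:: s; t] [:: x; y]).
have [uacbd uadbc] := uniq4_pairings u.
rewrite /collinear_pairs (opposite a b c d) // (opposite a c b d) // (opposite a d b c) //.
rewrite !oddD !oddb.
by case: (collinear B e b c); case: (collinear B e b d); case: (collinear B e c d).
Qed.

Lemma line_is_pattern q : 0 < B q -> line_pattern B q.
Proof.
move=> lq; have /cards4P[a [b [c [d [u qE]]]]] : #|q| == 4 by rewrite line_card.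
have [aq bq cq dq] : [/\ a \in q, b \in q, c \in q & d \in q] by rewrite qE !inE !eqxx !orbT.
have [abc abd acd bcd] := uniq4_triples u.
exists a, b, c, d; split=> // [|e eq]; last exact: (collinear_pairs_line_even lq u).
by apply/and4P; split; apply: (collinear_line lq).
Qed.

Lemma card_collinear_with u v : u != v -> #|[set e | collinear B e u v]| <= 2 * lam.
Proof.
(* Such points lie on the lam lines through u and v, two on each. *)
move=> uv; pose through (b : {set T}) := [set u; v] \subset b.
pose rest b := if 0 < B b then b :\: [set u; v] else set0.
have cover : [set e | collinear B e u v] \subset \bigcup_(b | through b) rest b.
  apply/subsetP => e; rewrite inE => /collinearP[/= + [b lb [eb ub vb]]].
  rewrite !inE !negb_or => /andP[/andP[eu ev] _].
  apply/bigcupP; exists b; first by rewrite /through subUset !sub1set ub vb.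
  by rewrite /rest lb !inE negb_or eu ev eb.
apply: leq_trans (subset_leq_card cover) _; apply: leq_trans (card_bigcup_le _ _) _.
have [_ /(_ [set u; v])] := design; rewrite cards2 uv => /(_ erefl) <-.
rewrite big_distrr /=; apply: leq_sum => b tb; rewrite /rest.
case: ifP => lb; last by rewrite cards0.
by rewrite cardsD (setIidPr tb) (line_card lb) cards2 uv (supersimple_mult b simple) lb.
Qed.

Hypothesis two_graph : regular_two_graph (collinear_triples B).
Hypothesis large : 2 * lam + 2 < #|T|.

Lemma exists_noncollinear u v : u != v ->
  exists2 e, e \notin [set u; v] & ~~ collinear B e u v.
Proof.
move=> uv; pose A := [set u; v] :|: [set e | collinear B e u v].
have small : #|A| < #|[set: T]|.
  rewrite cardsT; apply: leq_ltn_trans (leq_card_setU _ _).1 _.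
  by rewrite cards2 uv; have := card_collinear_with uv; lia.
have /subsetPn[e _] : ~~ ([set: T] \subset A).
  by apply: contraTN small => /subset_leq_card; rewrite -leqNgt.
by rewrite in_setU negb_or inE => /andP[euv nc]; exists e.
Qed.

Lemma line_of_pattern q : line_pattern B q -> 0 < B q.
Proof.
case=> a [b [c [d [u -> /and4P[abc abd acd bcd] even_pairs]]]].
have [uabc _ _ _] := uniq4_triples u.
have [L lL [aL bL cL]] : exists2 L, 0 < B L & [/\ a \in L, b \in L & c \in L].
  by case/collinearP: abc.
have [x uabcx LE] := line_fourth_point lL uabc aL bL cL.
have [-> | dx] := eqVneq d x; first by rewrite -LE.
have xq : x \notin [set a; b; c; d].
  move: uabcx; rewrite mem_set4 -(rot_uniq 3) /= !inE !negb_or.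
  by case/and4P=> /and3P[-> -> ->] _ _ _; rewrite eq_sym.
have uxq : uniq [:: x; a; b; c; d] by rewrite cons_uniq -mem_set4 xq.
have xL : x \in L by rewrite LE !inE eqxx orbT.
have [xab xac xbc _] := uniq4_triples (mask_uniq uxq [:: true; true; true; true; false]).
have /and3P[xad xbd xcd] := collinear_apex_pairs two_graph uxq
  (collinear_line lL xab xL aL bL) (collinear_line lL xac xL aL cL)
  (collinear_line lL xbc xL bL cL) abd acd (even_pairs x xq).
move: xad xbd xcd; rewrite ![collinear B x _ _]collinear_swapl.
rewrite ![collinear B _ x _]collinear_swapr => adx bdx cdx.
have [e] := exists_noncollinear dx; rewrite !inE negb_or => /andP[ed ex] edx.
have ea : e != a by apply: contraNneq edx => ->.
have eb : e != b by apply: contraNneq edx => ->.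
have ec : e != c by apply: contraNneq edx => ->.
have ue : uniq [:: e; a; b; c; d; x].
  by rewrite cons_uniq (rot_uniq 1 [:: x; a; b; c; d]) uxq !inE !negb_or ea eb ec ed ex.
have := collinear_pairs_parity_swap two_graph ue adx bdx cdx edx.
rewrite (negbTE (even_pairs e _)) ?(negbTE (collinear_pairs_line_even lL uabcx aL bL cL xL _)) //.
  by rewrite LE !inE !negb_or ea eb ec ex.
by rewrite !inE !negb_or ea eb ec ed.
Qed.

Lemma line_patternP q : 0 < B q <-> line_pattern B q.
Proof. by split; [apply: line_is_pattern | apply: line_of_pattern]. Qed.

End Design.

Lemma line_pattern_imset (T1 T2 : finType) (B1 : {set T1} -> nat) (B2 : {set T2} -> nat)
    (f : T1 -> T2) (q : {set T1}) :
  bijective f -> (forall x y z, collinear B2 (f x) (f y) (f z) = collinear B1 x y z) ->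
  line_pattern B1 q -> line_pattern B2 (f @: q).
Proof.
move=> f_bij f_coll [a [b [c [d [u qE coll even_pairs]]]]].
have f_inj := bij_inj f_bij; have [g fK gK] := f_bij.
exists (f a), (f b), (f c), (f d); split.
- by rewrite (map_inj_uniq f_inj [:: a; b; c; d]).
- by rewrite qE !imsetU !imset_set1.
- by rewrite !f_coll.
- by move=> e; rewrite -[e]gK mem_imset // /collinear_pairs !f_coll => /even_pairs.
Qed.

Lemma design_isomorphic_of_collinear (T1 T2 : finType)
    (B1 : {set T1} -> nat) (B2 : {set T2} -> nat) (f : T1 -> T2) :
  supersimple B1 -> supersimple B2 ->
  (forall q, 0 < B1 q <-> line_pattern B1 q) -> (forall q, 0 < B2 q <-> line_pattern B2 q) ->
  bijective f -> (forall x y z, collinear B2 (f x) (f y) (f z) = collinear B1 x y z) ->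
  design_isomorphic B1 B2.
Proof.
move=> simple1 simple2 lines1 lines2 f_bij f_coll; exists f; split=> // b.
have [g fK gK] := f_bij; have g_bij : bijective g by exists f.
have g_coll x y z : collinear B1 (g x) (g y) (g z) = collinear B2 x y z.
  by rewrite -f_coll !gK.
rewrite (supersimple_mult _ simple1) (supersimple_mult _ simple2); congr nat_of_bool.
apply/idP/idP => [/lines2 /(line_pattern_imset g_bij g_coll)|/lines1 pat].
  by rewrite -imset_comp (eq_imset _ fK) imset_id => /lines1.
exact/lines2/line_pattern_imset.
Qed.

Definition extend_derived (T1 T2 : finType) (inf1 : T1) (inf2 : T2)
    (g : dvertex inf1 -> dvertex inf2) (x : T1) : T2 :=
  if insub x is Some y then val (g y) else inf2.

Lemma extend_derived_base (T1 T2 : finType) (inf1 : T1) (inf2 : T2)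
    (g : dvertex inf1 -> dvertex inf2) :
  extend_derived g inf1 = inf2.
Proof. by rewrite /extend_derived insubF // eqxx. Qed.

Lemma extend_derived_val (T1 T2 : finType) (inf1 : T1) (inf2 : T2)
    (g : dvertex inf1 -> dvertex inf2) (y : dvertex inf1) :
  extend_derived g (val y) = val (g y).
Proof. by rewrite /extend_derived valK. Qed.

Section DerivedGraphIsomorphism.

Variables (T1 T2 : finType) (inf1 : T1) (inf2 : T2).
Variables (g : dvertex inf1 -> dvertex inf2) (g' : dvertex inf2 -> dvertex inf1).

Lemma extend_derivedK : cancel g g' -> cancel (extend_derived g) (extend_derived g').
Proof.
move=> gK x; have [->|xi] := eqVneq x inf1; first by rewrite !extend_derived_base.
by rewrite -[x]/(val (Sub x xi : dvertex inf1)) !extend_derived_val gK.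
Qed.

Lemma collinear_extend_derived (B1 : {set T1} -> nat) (B2 : {set T2} -> nat) :
  regular_two_graph (collinear_triples B1) -> regular_two_graph (collinear_triples B2) ->
  cancel g g' -> (forall a b, derived_adj B1 inf1 a b = derived_adj B2 inf2 (g a) (g b)) ->
  forall x y z, collinear B2 (extend_derived g x) (extend_derived g y) (extend_derived g z) =
                collinear B1 x y z.
Proof.
move=> two_graph1 two_graph2 gK adj x y z; set f := extend_derived g.
have f_inj : injective f := can_inj (extend_derivedK gK).
have at_base v w : v != inf1 -> w != inf1 -> collinear B2 inf2 (f v) (f w) = collinear B1 inf1 v w.
  move=> vi wi; have := adj (Sub v vi) (Sub w wi).
  by rewrite /derived_adj -!extend_derived_val !SubK => /esym.
have [u|nu] := boolP (uniq [:: x; y; z]); last first.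
  have nfu : ~~ uniq [:: f x; f y; f z] by rewrite (map_inj_uniq f_inj [:: x; y; z]).
  by apply/idP/idP => /collinear_uniq; rewrite ?(negbTE nu) ?(negbTE nfu).
move: (u); rewrite /= !inE !negb_or => /and3P[/andP[xy xz] yz _].
have [xi|xi] := eqVneq x inf1; first by rewrite xi /f extend_derived_base at_base // -xi eq_sym.
have [yi|yi] := eqVneq y inf1.
  by rewrite collinear_swapl [RHS]collinear_swapl yi /f extend_derived_base at_base // -yi eq_sym.
have [zi|zi] := eqVneq z inf1.
  rewrite collinear_swapr collinear_swapl [RHS]collinear_swapr [RHS]collinear_swapl.
  by rewrite zi /f extend_derived_base at_base // -zi eq_sym.
have ui : uniq [:: inf1; x; y; z] by rewrite cons_uniq u !inE !negb_or !(eq_sym inf1) xi yi zi.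
rewrite (collinear_apex two_graph1 ui) (collinear_apex two_graph2 (o := inf2)) ?at_base //.
by rewrite -(extend_derived_base g) (map_inj_uniq f_inj [:: inf1; x; y; z]).
Qed.

End DerivedGraphIsomorphism.

Theorem lemma6p5 (T1 T2 : finType) (B1 : {set T1} -> nat) (B2 : {set T2} -> nat)
  (lam1 lam2 : nat) (inf1 : T1) (inf2 : T2) :
  is_2design 4 lam1 B1 -> supersimple B1 -> prop_triangle B1 ->
  regular_two_graph (collinear_triples B1) -> 2 * lam1 + 2 < #|T1| ->
  is_2design 4 lam2 B2 -> supersimple B2 -> prop_triangle B2 ->
  regular_two_graph (collinear_triples B2) -> 2 * lam2 + 2 < #|T2| ->
  graph_isomorphic (derived_adj B1 inf1) (derived_adj B2 inf2) ->
  design_isomorphic B1 B2.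
Proof.
move=> design1 simple1 triangle1 two_graph1 large1 design2 simple2 triangle2 two_graph2 large2.
case=> g [[g' gK g'K] adj].
apply: (design_isomorphic_of_collinear (f := extend_derived g)) => //.
- exact: line_patternP design1 simple1 triangle1 two_graph1 large1.
- exact: line_patternP design2 simple2 triangle2 two_graph2 large2.
- by exists (extend_derived g'); apply: extend_derivedK.
- exact: collinear_extend_derived two_graph1 two_graph2 gK adj.
Qed.
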